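(* Fix integers $n\ge 1$ and $N\ge 1$, tumor parameters $\alpha_0,\beta_0>0$, a constant $\tau(N)\in\mathbb{R}$, and for each $m\in\{1,\dots,n\}$ numbers $D_m>0$, integers $N_m\ge 1$, and $0<\rho_m^{\min}\le\rho_m^{\max}<\infty$. Index the organs so that $D_1^2/N_1\le D_2^2/N_2\le\cdots\le D_n^2/N_n$. Consider the robust problem $$\text{(RFRAC(N))}\quad f^*(N)=\max_{\vec d\in\mathbb{R}^N}\ \alpha_0\sum_{t=1}^N d_t+\beta_0\sum_{t=1}^N d_t^2-\tau(N)$$ subject to $\vec d\ge 0$ and, for every $m\in\{1,\dots,n\}$ and every $\tilde\rho_m\in[\rho_m^{\min},\rho_m^{\max}]$, $$\sum_{t=1}^N d_t+\tilde\rho_m\Big(\sum_{t=1}^N d_t^2-\frac{D_m^2}{N_m}\Big)\le D_m .$$ For $k\in\{0,1,\dots,n\}$, with $\mathrm{RC}^+_m=D_m+\rho_m^{\max}D_m^2/N_m$ and $\mathrm{RC}^-_m=D_m+\rho_m^{\min}D_m^2/N_m$, define the subproblem $$\text{(kSub(N))}\quad f^*(N;k)=\max_{\vec d\in\mathbb{R}^N}\ \alpha_0\sum_{t=1}^N d_t+\beta_0\sum_{t=1}^N d_t^2-\tau(N)$$ subject to $\vec d\ge 0$; $\sum_t d_t+\rho_m^{\max}\sum_t d_t^2\le \mathrm{RC}^+_m$ for $m=1,\dots,k$; $\sum_t d_t+\rho_m^{\min}\sum_t d_t^2\le \mathrm{RC}^-_m$ for $m=k+1,\dots,n$; $\sum_t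 d_t^2\ge D_k^2/N_k$ if $k\ne 0$; and $\sum_t d_t^2\le D_{k+1}^2/N_{k+1}$ if $k\ne n$. Then (RFRAC(N)) can be solved by solving the $n+1$ subproblems (kSub(N)), $k=0,\dots,n$, and picking a solution with the largest objective value: that is, $f^*(N)=\max\{f^*(N;k): k\in\{0,\dots,n\},\ \text{(kSub(N)) feasible}\}$, and an optimal solution of a subproblem attaining this maximum is optimal for (RFRAC(N)).
   Context: This is the robust counterpart (for a fixed number $N$ of treatment fractions) of the linear-quadratic fractionation problem in radiotherapy: $\vec d=(d_1,\dots,d_N)$ are the doses per fraction, the objective is the tumor biological effect with proliferation correction $\tau(N)$ (a constant once $N$ is fixed), and for each organ-at-risk $m$ the unknown parameter $\tilde\rho_m=\beta_m/\alpha_m$ lies in the known interval $[\rho_m^{\min},\rho_m^{\max}]$; $D_m$ is a tolerance dose delivered conventionally in $N_m$ equal fractions. Terms whose index condition is vacuous (e.g. the constraints for $m=1,\dots,k$ when $k=0$) are omitted. *)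

From HB Require Import structures.
From mathcomp Require Import all_boot all_order all_algebra.
From mathcomp Require Import boolp classical_sets reals.
Set Implicit Arguments. Unset Strict Implicit. Unset Printing Implicit Defensive.
Import Order.TTheory GRing.Theory Num.Theory.
Local Open Scope ring_scope.
Local Open Scope classical_set_scope.

(* Dose vectors d = (d_1,...,d_N) are functions 'I_N -> R (index t-1). *)
Section Frac.
Variable R : realType.

Definition sum1 (N : nat) (d : 'I_N -> R) : R := \sum_(t < N) d t.
Definition sum2 (N : nat) (d : 'I_N -> R) : R := \sum_(t < N) d t ^+ 2.

Definition frac_obj (N : nat) (alpha0 beta0 tauN : R) (d : 'I_N -> R) : R :=
  alpha0 * sum1 d + beta0 * sum2 d - tauN.

Definition nonneg_vec (N : nat) (d : 'I_N -> R) : Prop := forall t, 0 <= d t.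

(* Organs are indexed m = 1..n (as in the paper); data given as functions on nat. *)
Definition thr (D : nat -> R) (Nm : nat -> nat) (m : nat) : R :=
  D m ^+ 2 / (Nm m)%:R.

Definition rfrac_feasible (N n : nat) (D : nat -> R) (Nm : nat -> nat)
  (rhomin rhomax : nat -> R) (d : 'I_N -> R) : Prop :=
  nonneg_vec d /\
  forall m : nat, (1 <= m <= n)%N ->
    forall rho : R, rhomin m <= rho <= rhomax m ->
      sum1 d + rho * (sum2 d - thr D Nm m) <= D m.

Definition ksub_feasible (N n : nat) (D : nat -> R) (Nm : nat -> nat)
  (rhomin rhomax : nat -> R) (k : nat) (d : 'I_N -> R) : Prop :=
  [/\ nonneg_vec d,
      (forall m : nat, (1 <= m <= k)%N ->
         sum1 d + rhomax m * sum2 d <= D m + rhomax m * thr D Nm m),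
      (forall m : nat, (k + 1 <= m <= n)%N ->
         sum1 d + rhomin m * sum2 d <= D m + rhomin m * thr D Nm m),
      (k != 0%N -> thr D Nm k <= sum2 d) &
      (k != n -> sum2 d <= thr D Nm k.+1)].

Definition opt_value (N : nat) (obj : ('I_N -> R) -> R) (F : set ('I_N -> R)) : R :=
  sup [set obj d | d in F].

Definition is_optimal (N : nat) (obj : ('I_N -> R) -> R) (F : set ('I_N -> R))
  (d : 'I_N -> R) : Prop :=
  F d /\ forall d', F d' -> obj d' <= obj d.

End Frac.

From HB Require Import structures.
From mathcomp Require Import all_boot all_order all_algebra.
From mathcomp Require Import boolp classical_sets reals.
From mathcomp Require Import lra zify.
Import Order.TTheory GRing.Theory Num.Theory.
Local Open Scope ring_scope.
Local Open Scope classical_set_scope.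

(** The robust constraint of organ [m] is affine in [rho], so it holds on the
whole interval iff it holds at both endpoints; which endpoint binds depends
only on the sign of [sum2 d - D_m^2/N_m].  On the slab [D_k^2/N_k <= sum2 d <=
D_(k+1)^2/N_(k+1)] the sorted thresholds fix that sign for every organ: organs
[m <= k] are bound by [rho_m^max], organs [m > k] by [rho_m^min].  So the
feasible set of (RFRAC(N)) is exactly the union of the feasible sets of the
subproblems (kSub(N)), and the supremum of the objective over a finite union is
the largest of the suprema over its nonempty pieces.  This needs the objective
bounded above on the feasible set ([sup] is junk otherwise), which the
constraint of organ 1 alone provides. *)

Lemma exists_argmax {disp : Order.disp_t} {T : orderType disp} {P : nat -> Prop}
    (v : nat -> T) (n : nat) :
  (exists2 k, (k <= n)%N & P k) ->
  exists k, [/\ (k <= n)%N, P k & forall k', (k' <= n)%N -> P k' -> (v k' <= v k)%O].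
Proof.
move=> [k0 k0n Pk0].
have [|i /asboolP Pi imax] :=
  @arg_maxP _ _ _ (Ordinal (k0n : (k0 < n.+1)%N)) (fun i => `[< P i >]) (v \o val).
  exact/asboolP.
exists (val i); split=> [|//|k' k'n Pk']; first by rewrite -ltnS ltn_ord.
exact: (imax (Ordinal (k'n : (k' < n.+1)%N))) (asboolT Pk').
Qed.

Section SupFiniteUnion.
Context {R : realType} {X : Type} {f : X -> R} {F : set X} {G : nat -> set X}.
Context {n : nat}.
Hypothesis G_sub : forall k, (k <= n)%N -> G k `<=` F.
Hypothesis F_cover : forall x, F x -> exists2 k, (k <= n)%N & G k x.
Hypothesis F_ub : has_ubound (f @` F).

Lemma le_sup_image_piece k x : (k <= n)%N -> G k x -> f x <= sup (f @` G k).
Proof.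
move=> kn Gkx; apply: ub_le_sup; last by exists x.
exact: subset_has_ubound (image_subset (G_sub _ kn)) F_ub.
Qed.

Lemma sup_image_piece_le k : (k <= n)%N -> G k !=set0 -> sup (f @` G k) <= sup (f @` F).
Proof.
move=> kn [x Gkx]; apply: ge_sup; first by exists (f x), x.
by move=> _ [y Gky <-]; apply: (ub_le_sup F_ub); exists y => //; apply: G_sub Gky.
Qed.

Lemma sup_image_le_piece {x} : F x ->
  exists k, [/\ (k <= n)%N, G k !=set0 & f x <= sup (f @` G k)].
Proof.
by move=> Fx; have [k kn Gkx] := F_cover _ Fx; exists k; split=> //;
  [exists x | apply: le_sup_image_piece].
Qed.

Lemma sup_image_finite_union : F !=set0 ->
  exists2 k, (k <= n)%N & G k !=set0 /\ sup (f @` F) = sup (f @` G k).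
Proof.
move=> [x0 Fx0]; have [k0 [k0n G0 _]] := sup_image_le_piece Fx0.
have : exists2 k, (k <= n)%N & G k !=set0 by exists k0.
move=> /(exists_argmax (fun k => sup (f @` G k)) n) [k [kn Gk kmax]].
exists k => //; split=> //; apply/eqP; rewrite eq_le sup_image_piece_le // andbT.
apply: ge_sup; first by exists (f x0), x0.
move=> _ [x Fx <-]; have [k' [k'n Gk' le_x]] := sup_image_le_piece Fx.
exact: le_trans le_x (kmax k' k'n Gk').
Qed.

Lemma optimal_of_piece k x : (k <= n)%N -> G k x ->
  (forall k', (k' <= n)%N -> G k' !=set0 -> sup (f @` G k') <= f x) ->
  F x /\ forall y, F y -> f y <= f x.
Proof.
move=> kn Gkx xmax; split=> [|y Fy]; first exact: G_sub Gkx.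
have [k' [k'n Gk' le_y]] := sup_image_le_piece Fy.
exact: le_trans le_y (xmax k' k'n Gk').
Qed.

End SupFiniteUnion.

Lemma robust_le_endpoints {R : realDomainType} (a b c lo hi : R) : lo <= hi ->
  (forall rho, lo <= rho <= hi -> a + rho * b <= c) <->
  a + lo * b <= c /\ a + hi * b <= c.
Proof.
move=> lo_hi; split=> [H | [H_lo H_hi] rho /andP[lo_rho rho_hi]].
  by split; apply: H; rewrite lexx lo_hi.
have [b_ge0 | b_lt0] := leP 0 b.
  by apply: le_trans H_hi; rewrite lerD2l ler_wpM2r.
by apply: le_trans H_lo; rewrite lerD2l ler_wnM2r // ltW.
Qed.

Lemma ksub_constraintE {R : numDomainType} (s1 s2 r t c : R) :
  (s1 + r * s2 <= c + r * t) = (s1 + r * (s2 - t) <= c).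
Proof. by rewrite mulrBr addrA lerBlDr. Qed.

Lemma thr_ge0 {R : realType} (D : nat -> R) (Nm : nat -> nat) m : 0 <= thr D Nm m.
Proof. by rewrite /thr divr_ge0 ?sqr_ge0. Qed.

Section Dose.
Context {R : realType} {N : nat}.
Implicit Types d : 'I_N -> R.

Lemma sum1_ge0 d : nonneg_vec d -> 0 <= sum1 d.
Proof. by move=> d_ge0; rewrite /sum1 sumr_ge0. Qed.

Lemma sum2_ge0 d : 0 <= sum2 d.
Proof. by rewrite /sum2 sumr_ge0 // => t _; rewrite sqr_ge0. Qed.

Lemma sum1_zero : sum1 (fun _ : 'I_N => 0 : R) = 0.
Proof. by rewrite /sum1 big1. Qed.

Lemma sum2_zero : sum2 (fun _ : 'I_N => 0 : R) = 0.
Proof. by rewrite /sum2 big1 // => t _; rewrite expr0n. Qed.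

Lemma frac_obj_le_of_constraint (a b tau r t c : R) d :
  0 <= a -> 0 <= b -> 0 < r -> nonneg_vec d ->
  sum1 d + r * (sum2 d - t) <= c ->
  frac_obj a b tau d <= a * (c + r * t) + b * (c / r + t) - tau.
Proof.
move=> a_ge0 b_ge0 r_gt0 d_ge0 hc.
have s1_ge0 := sum1_ge0 d d_ge0; have s2_ge0 := sum2_ge0 d.
have le_s1 : sum1 d <= c + r * t by nra.
have le_s2 : sum2 d <= c / r + t.
  rewrite -(ler_pM2l r_gt0) mulrDr mulrCA divff ?gt_eqF // mulr1; lra.
by rewrite /frac_obj lerD2r lerD // ler_wpM2l.
Qed.

End Dose.

Section Subproblems.
Context {R : realType} {N n : nat} {D : nat -> R} {Nm : nat -> nat}.
Context {rhomin rhomax : nat -> R}.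
Local Notation T := (thr D Nm).
Local Notation F := (rfrac_feasible (N:=N) n D Nm rhomin rhomax).
Local Notation Fk := (ksub_feasible (N:=N) n D Nm rhomin rhomax).
Hypothesis rho_le : forall m, (1 <= m <= n)%N -> rhomin m <= rhomax m.

Lemma rfrac_feasibleE d : F d <-> nonneg_vec d /\
  forall m, (1 <= m <= n)%N ->
    sum1 d + rhomin m * (sum2 d - T m) <= D m /\
    sum1 d + rhomax m * (sum2 d - T m) <= D m.
Proof.
by split=> -[d_ge0 H]; split=> // m m_in;
  apply/(robust_le_endpoints _ _ _ _ _ (rho_le _ m_in)); apply: H.
Qed.

Lemma rfrac_sub_ksub d : F d -> exists2 k, (k <= n)%N & Fk k d.
Proof.
move=> /rfrac_feasibleE[d_ge0 H].
pose P k := (k <= n)%N && ((k == 0)%N || (T k <= sum2 d)).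
have P0 : exists k, P k by exists 0%N.
have P_le : forall k, P k -> (k <= n)%N by move=> k /andP[].
case: (ex_maxnP P0 P_le) => k /andP[kn Pk] kmax.
exists k => //; split=> //.
- move=> m /andP[m1 mk]; rewrite ksub_constraintE; apply: (H m _).2; lia.
- move=> m /andP[km mn]; rewrite ksub_constraintE; apply: (H m _).1; lia.
- by case/orP: Pk => [/eqP->|].
- move=> k_neq_n; have k_lt_n : (k < n)%N by rewrite ltn_neqAle k_neq_n.
  have /negP : ~ P k.+1 by move=> /kmax; rewrite ltnn.
  by rewrite /P k_lt_n /= -ltNge => /ltW.
Qed.

Lemma rfrac_feasible0 :
  (forall m, (1 <= m <= n)%N -> 0 <= D m /\ 0 <= rhomin m) -> F (fun _ => 0).
Proof.
move=> D_rho_ge0; apply/rfrac_feasibleE; split=> // m m_in.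
have [D_ge0 rho_ge0] := D_rho_ge0 m m_in.
have := rho_le _ m_in; have := thr_ge0 D Nm m; rewrite sum1_zero sum2_zero; nra.
Qed.

Lemma rfrac_obj_bounded (a b tau : R) : (1 <= n)%N -> 0 <= a -> 0 <= b ->
  0 < rhomin 1%N -> has_ubound (frac_obj a b tau @` F).
Proof.
move=> n1 a_ge0 b_ge0 rho1_gt0; have one_in : (1 <= 1 <= n)%N by rewrite n1.
exists (a * (D 1%N + rhomin 1%N * T 1%N) + b * (D 1%N / rhomin 1%N + T 1%N) - tau).
move=> _ [d /rfrac_feasibleE[d_ge0 H] <-].
exact: frac_obj_le_of_constraint (H 1%N one_in).1.
Qed.

Hypothesis thr_sorted : forall m, (1 <= m < n)%N -> T m <= T m.+1.

Lemma thr_homo a b : (1 <= a)%N -> (a <= b)%N -> (b <= n)%N -> T a <= T b.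
Proof.
move=> a1 ab bn; pose I := [pred i | (1 <= i <= n)%N].
apply: (@Order.NatMonotonyTheory.nondecn_inP _ _ I T _ _ a b);
  rewrite ?inE //; try lia.
- move=> i j; rewrite !inE => /andP[i1 _] /andP[_ jn] k.
  by rewrite !ltEnat inE => /andP[ik kj]; lia.
- by move=> i; rewrite !inE => /andP[i1 _] /andP[_ i_lt_n]; rewrite thr_sorted ?i1.
Qed.

Lemma ksub_sub_rfrac k : (k <= n)%N -> Fk k `<=` F.
Proof.
move=> kn d [d_ge0 le_max le_min thr_k thr_k1]; apply/rfrac_feasibleE.
split=> // m /andP[m1 mn]; have rho_m : rhomin m <= rhomax m by rewrite rho_le ?m1.
have [mk | km] := leqP m k.
  have k_neq0 : k != 0%N by lia.
  have thr_m : T m <= sum2 d := le_trans (thr_homo _ _ m1 mk kn) (thr_k k_neq0).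
  have bind : sum1 d + rhomax m * (sum2 d - T m) <= D m.
    by rewrite -ksub_constraintE le_max ?m1.
  by split=> //; apply: le_trans bind; rewrite lerD2l ler_wpM2r ?subr_ge0.
have k_neq_n : k != n by lia.
have thr_m : sum2 d <= T m.
  exact: le_trans (thr_k1 k_neq_n) (thr_homo _ _ (ltn0Sn k) km mn).
have bind : sum1 d + rhomin m * (sum2 d - T m) <= D m.
  by rewrite -ksub_constraintE le_min // addn1 km.
by split=> //; apply: le_trans bind; rewrite lerD2l ler_wnM2r ?subr_le0.
Qed.

End Subproblems.

Theorem mainTheorem1 (R : realType) (n N : nat) (alpha0 beta0 tauN : R)
  (D : nat -> R) (Nm : nat -> nat) (rhomin rhomax : nat -> R) :
  (1 <= n)%N -> (1 <= N)%N -> 0 < alpha0 -> 0 < beta0 ->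
  (forall m, (1 <= m <= n)%N ->
     [/\ 0 < D m, (1 <= Nm m)%N, 0 < rhomin m & rhomin m <= rhomax m]) ->
  (forall m, (1 <= m < n)%N -> thr D Nm m <= thr D Nm m.+1) ->
  let obj := frac_obj alpha0 beta0 tauN in
  let F := rfrac_feasible (N:=N) n D Nm rhomin rhomax in
  let Fk := fun k => ksub_feasible (N:=N) n D Nm rhomin rhomax k in
  (* f*(N) = max { f*(N;k) : 0 <= k <= n, (kSub(N)) feasible } *)
  ((exists2 k, (k <= n)%N & Fk k !=set0 /\ opt_value obj F = opt_value obj (Fk k)) /\
   (forall k, (k <= n)%N -> Fk k !=set0 -> opt_value obj (Fk k) <= opt_value obj F)) /\
  (* an optimal solution of a subproblem attaining this maximum is optimal for RFRAC(N) *)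
  (forall k d, (k <= n)%N -> is_optimal obj (Fk k) d ->
     (forall k', (k' <= n)%N -> Fk k' !=set0 -> opt_value obj (Fk k') <= obj d) ->
     is_optimal obj F d).
Proof.
move=> n1 _ alpha0_gt0 beta0_gt0 organ thr_sorted obj F Fk.
have rho_le m : (1 <= m <= n)%N -> rhomin m <= rhomax m by case/organ.
have Fk_sub k : (k <= n)%N -> Fk k `<=` F := ksub_sub_rfrac rho_le thr_sorted k.
have F_cover d : F d -> exists2 k, (k <= n)%N & Fk k d := rfrac_sub_ksub rho_le d.
have F_ub : has_ubound (obj @` F).
  apply: rfrac_obj_bounded (ltW alpha0_gt0) (ltW beta0_gt0) _ => //.
  by case: (organ 1%N); rewrite ?n1.
have F0 : F (fun _ => 0).
  by apply: rfrac_feasible0 => // m /organ[/ltW D_ge0 _ /ltW rho_ge0 _].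
split; first split.
- exact: sup_image_finite_union Fk_sub F_cover F_ub (ex_intro _ _ F0).
- exact: sup_image_piece_le Fk_sub F_ub.
- move=> k d kn [Fk_d _] d_max.
  exact: optimal_of_piece Fk_sub F_cover F_ub _ _ kn Fk_d d_max.
Qed.
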